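(* Let $\theta_0\in\mathbb{R}$, let $\hat\theta_u$ and $\hat\theta_b'$ be real random variables with finite second moments such that $\mathbb{E}[\hat\theta_u]=\theta_0$ and $\mathbb{E}[\hat\theta_b']=\theta_0$, and let $(\mu_k)_{k\ge1}$ be a sequence of real numbers with $\mu_k\to\infty$ as $k\to\infty$. Define $\hat\theta_b^{(k)}=\hat\theta_b'+\mu_k$, so that $\mathrm{Var}(\hat\theta_b^{(k)})=\sigma^2_b:=\mathrm{Var}(\hat\theta_b')$ and $\mathrm{Cov}(\hat\theta_b^{(k)},\hat\theta_u)=\sigma_{bu}:=\mathrm{Cov}(\hat\theta_b',\hat\theta_u)$ for all $k$. Let $\sigma^2_u=\mathrm{Var}(\hat\theta_u)$ and assume $\sigma^2_u>0$ and $\sigma^2_u+\sigma^2_b-2\sigma_{bu}>0$. For each $k$ define $$\hat\lambda^{(k)}=\frac{\sigma^2_u-\sigma_{bu}}{(\hat\theta_u-\hat\theta_b^{(k)})^2+\sigma^2_u+\sigma^2_b-2\sigma_{bu}},\qquad \hat\theta_{\hat\lambda}^{(k)}=\hat\lambda^{(k)}\hat\theta_b^{(k)}+(1-\hat\lambda^{(k)})\hat\theta_u .$$ Then $$\lim_{k\to\infty}\mathbb{E}\big[(\hat\theta_{\hat\lambda}^{(k)}-\theta_0)^2\big]=\sigma^2_u .$$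
   Context: $\hat\theta_u$ is an unbiased estimator of $\theta_0$, and $\hat\theta_b^{(k)}$ is a biased estimator with bias $\mu_k$; $\hat\theta_{\hat\lambda}^{(k)}$ is the combination estimator formed with known variances and covariance. *)

From HB Require Import structures.
From mathcomp Require Import all_boot all_order all_algebra.
From mathcomp Require Import all_classical all_reals all_analysis.
Set Implicit Arguments. Unset Strict Implicit. Unset Printing Implicit Defensive.
Import Order.TTheory GRing.Theory Num.Theory.
Local Open Scope ring_scope.

Definition theta_b {T : Type} {R : realType} (thb' : T -> R) (mu : R) : T -> R :=
  fun w => thb' w + mu.

Definition lambda_hat {T : Type} {R : realType} (su2 sb2 sbu : R)
  (thu thb : T -> R) : T -> R :=
  fun w => (su2 - sbu) / ((thu w - thb w) ^+ 2 + su2 + sb2 - 2 * sbu).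

Definition theta_lambda {T : Type} {R : realType} (su2 sb2 sbu : R)
  (thu thb : T -> R) : T -> R :=
  fun w => lambda_hat su2 sb2 sbu thu thb w * thb w
           + (1 - lambda_hat su2 sb2 sbu thu thb w) * thu w.

From HB Require Import structures.
From mathcomp Require Import all_boot all_order all_algebra.
From mathcomp Require Import all_classical all_reals all_analysis.
From mathcomp Require Import ring lra.
Import Order.TTheory GRing.Theory Num.Theory.
Import numFieldNormedType.Exports measurable_realfun.
Local Open Scope classical_set_scope.
Local Open Scope ring_scope.

(* The error of the combined estimator is [(thu - theta0) + shrink a c (thb - thu)]
   with [shrink a c x = a x / (x^2 + c)], [c > 0]: a continuous, bounded
   function vanishing at [+oo].  As [mu k -> +oo] the gap [thb - thu = mu k + (thb' - thu)]
   tends to [+oo] pointwise, so the shrinkage term tends to 0 pointwise while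
   staying uniformly bounded, and dominated convergence (dominating function
   [2 (thu - theta0)^2 + 2 K^2]) gives convergence of the mean squared error to
   [E[(thu - theta0)^2] = Var thu]. *)

Section shrink.
Context {R : realType}.
Variables (a c : R).
Hypothesis c_gt0 : 0 < c.

Definition shrink (x : R) : R := a * x / (x ^+ 2 + c).

Lemma shrink_den_gt0 (x : R) : 0 < x ^+ 2 + c.
Proof. by rewrite ltr_wpDl // sqr_ge0. Qed.

Lemma shrink_continuous : continuous shrink.
Proof.
move=> x; apply: cvgM; first by apply: cvgM; [exact: cvg_cst | exact: cvg_id].
apply: cvgV; first by rewrite gt_eqF // shrink_den_gt0.
by apply: cvgD; [exact: exprn_continuous | exact: cvg_cst].
Qed.

Lemma shrink_bounded (x : R) : `|shrink x| <= `|a| * (1 + c^-1).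
Proof.
have norm_le : `|x| <= (1 + c^-1) * (x ^+ 2 + c).
  have norm_le_sqr1 : `|x| <= x ^+ 2 + 1.
    have [x_le1|x_gt1] := lerP `|x| 1.
      by rewrite (le_trans x_le1) // lerDr sqr_ge0.
    by rewrite -(real_normK (num_real x)); nra.
  have cx2_ge0 : 0 <= c^-1 * x ^+ 2.
    by rewrite mulr_ge0 // ?sqr_ge0 // invr_ge0 ltW.
  have -> : (1 + c^-1) * (x ^+ 2 + c) = x ^+ 2 + c + c^-1 * x ^+ 2 + 1.
    by field; rewrite gt_eqF.
  have c_ge0 := ltW c_gt0; lra.
rewrite /shrink -mulrA normrM ler_wpM2l // normrM normfV.
by rewrite (gtr0_norm (shrink_den_gt0 x)) ler_pdivrMr ?shrink_den_gt0.
Qed.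

Lemma shrink_cvgy0 : shrink x @[x --> +oo] --> 0.
Proof.
apply/cvgrPdist_lt => e e_gt0; near=> x.
have x_gt : `|a| / e < x by near: x; apply: nbhs_pinfty_gt; exact: num_real.
have x_gt0 : 0 < x by apply: le_lt_trans x_gt; rewrite divr_ge0 // ltW.
rewrite sub0r normrN /shrink normrM normrM normfV (gtr0_norm x_gt0).
rewrite (gtr0_norm (shrink_den_gt0 x)) ltr_pdivrMr ?shrink_den_gt0 //.
move: x_gt; rewrite ltr_pdivrMr // => ea_lt.
have ec_gt0 := mulr_gt0 e_gt0 c_gt0; nra.
Unshelve. all: end_near. Qed.

End shrink.

Lemma theta_lambda_subE {T : Type} {R : realType} (su2 sb2 sbu t : R)
    (thu thb : T -> R) (w : T) :
  theta_lambda su2 sb2 sbu thu thb w - t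
  = thu w - t + shrink (su2 - sbu) (su2 + sb2 - 2 * sbu) (thb w - thu w).
Proof.
rewrite /theta_lambda /lambda_hat /shrink.
have -> : (thu w - thb w) ^+ 2 + su2 + sb2 - 2 * sbu
    = (thb w - thu w) ^+ 2 + (su2 + sb2 - 2 * sbu) by ring.
ring.
Qed.

Section expectation_sqr.
Context {d : measure_display} {T : measurableType d} {R : realType}.
Variable P : probability T R.

Lemma variance_centeredE (X : T -> R) (m : R) : ('E_P[X] = m%:E)%E ->
  'V_P[X] = ('E_P[fun w => ((X w - m) ^+ 2)%R])%E.
Proof.
move=> EX; rewrite /variance covariance.unlock EX /=.
by congr (expectation P _); apply/funext => w; rewrite /= expr2.
Qed.

Lemma expectation_sqrD_vanishing (U : T -> R) (g : nat -> T -> R) (K : R) :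
  U \in Lfun P 2%:E ->
  (forall k, measurable_fun setT (g k)) ->
  (forall k w, `|g k w| <= K) ->
  (forall w, g ^~ w @ \oo --> 0) ->
  ('E_P[fun w => ((U w + g k w) ^+ 2)%R] @[k --> \oo]
   --> 'E_P[fun w => (U w ^+ 2)%R])%E.
Proof.
move=> LU mg g_le g_cvg0.
have mU : measurable_fun setT U by have := sub_Lfun_mfun LU; rewrite inE.
rewrite expectation.unlock.
apply: (@dominated_cvg _ _ _ P setT measurableT _ _
  (fun w => (2 * U w ^+ 2 + 2 * K ^+ 2)%:E)).
- move=> k; apply/measurable_EFinP; apply: measurable_funX.
  exact: measurable_funD.
- move=> w _; apply: cvg_EFin; first exact: nearW.
  have Ug_cvg : U w + g k w @[k --> \oo] --> U w.
    by rewrite -[X in _ --> X]addr0; apply: cvgD; [exact: cvg_cst | exact: g_cvg0].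
  by rewrite expr2; under eq_fun do rewrite /= expr2; exact: cvgM.
- by [].
- apply: (eq_integrable measurableT
    (fun w => 2%:E * (U w ^+ 2)%:E + (cst (2 * K ^+ 2) w)%:E)%E).
    by move=> w _; rewrite /= EFinD EFinM.
  apply: integrableD => //; last exact: finite_measure_integrable_cst.
  exact/integrableZl/Lfun2_integrable_sqr.
- move=> k w _; rewrite lee_fin ger0_norm ?sqr_ge0 //.
  have K_ge0 : 0 <= K := le_trans (normr_ge0 _) (g_le k w).
  have gK : g k w ^+ 2 <= K ^+ 2.
    by rewrite -(real_normK (num_real (g k w))) lerXn2r // ?nnegrE.
  have := sqr_ge0 (U w - g k w); nra.
Qed.

End expectation_sqr.

Theorem proposition1 (d : measure_display) (T : measurableType d) (R : realType)
  (P : probability T R) (theta0 : R) (thu thb' : {RV P >-> R}) (mu : nat -> R) :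
  (thu : T -> R) \in Lfun P 2%:E ->
  (thb' : T -> R) \in Lfun P 2%:E ->
  ('E_P[thu] = theta0%:E)%E ->
  ('E_P[thb'] = theta0%:E)%E ->
  mu @ \oo --> +oo ->
  let su2 := fine ('V_P[thu])%E in
  let sb2 := fine ('V_P[thb'])%E in
  let sbu := fine (covariance P thb' thu) in
  0 < su2 ->
  0 < su2 + sb2 - 2 * sbu ->
  (fun k : nat =>
     ('E_P[fun w => ((theta_lambda su2 sb2 sbu thu (theta_b thb' (mu k)) w
                    - theta0) ^+ 2)%R])%E)
    @ \oo --> ('V_P[thu])%E.
Proof.
(* Only the moments of [thu] matter: whatever [thb'] is, the shrinkage term is
   bounded and vanishes pointwise. *)
move=> Lu _ Eu _ mu_cvgy su2 sb2 sbu _ c_gt0.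
rewrite (variance_centeredE P _ _ Eu).
under eq_fun => k do under eq_fun => w do rewrite theta_lambda_subE.
apply: (expectation_sqrD_vanishing P _ _
  (`|su2 - sbu| * (1 + (su2 + sb2 - 2 * sbu)^-1))).
- by apply: rpredB => //; [rewrite lee_fin ler1n | move=> ?; exact: Lfun_cst].
- move=> k; apply: measurableT_comp.
    exact: continuous_measurable_fun (shrink_continuous _ _ c_gt0).
  by apply: measurable_funB => //; exact: measurable_funD.
- by move=> k w; exact: shrink_bounded.
- move=> w; apply: (cvg_comp _ _ _ (shrink_cvgy0 _ _ c_gt0)) => /=.
  have -> : (fun k => theta_b thb' (mu k) w - thu w)
      = (fun r => r + (thb' w - thu w)) \o mu.
    by apply/funext => k; rewrite /theta_b /=; ring.
  exact: cvg_comp mu_cvgy (cvg_addrr _).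
Qed.
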